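(* Let $q=p^e$ with $p$ prime and $e\ge 1$, and fix an integer $s$ with $0\le s<e$. Let $C_1$ and $C_2$ be linear codes over $\mathbb{F}_q$ with parameters $[n,k_1,d_1]_q$ and $[n,k_2,d_2]_q$ respectively, such that $C_2^{\perp_s}\subseteq C_1$. Then there exists a quantum code with parameters $[[n,k_1+k_2-n,d]]_q$, where $$d=\min\{w_H(c)\mid c\in (C_1\setminus (C_2^{p^{e-s}})^{\perp})\cup (C_2^{p^{e-s}}\setminus C_1^{\perp})\}\ \ge\ \min\{d_1,d_2\},$$ and this code is pure to $\min\{d_1,d_2\}$.
   Context: For $\mathbf{x},\mathbf{y}\in\mathbb{F}_q^n$ the $s$-Galois form is $[\mathbf{x},\mathbf{y}]_s=\sum_{i=1}^n x_iy_i^{p^s}$. For a code $C\subseteq\mathbb{F}_q^n$, its $s$-Galois dual is $C^{\perp_s}=\{\mathbf{x}\in\mathbb{F}_q^n: [\mathbf{c},\mathbf{x}]_s=0\ \forall \mathbf{c}\in C\}$; $C^{\perp}=C^{\perp_0}$ is the Euclidean dual. For a vector $\mathbf{a}=(a_1,\dots,a_n)$, $\mathbf{a}^{p^{e-s}}=(a_1^{p^{e-s}},\dots,a_n^{p^{e-s}})$, and $C^{p^{e-s}}=\{\mathbf{a}^{p^{e-s}}:\mathbf{a}\in C\}$. $w_H$ denotes Hamming weight. Quantum codes: let $V_n=(\mathbb{C}^q)^{\otimes n}$ with orthonormal basis $\{|\mathbf{c}\rangle:\mathbf{c}\in\mathbb{F}_q^n\}$. For $a,b\in\mathbb{F}_q$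 define $X(a)|x\rangle=|x+a\rangle$, $Z(b)|x\rangle=\omega^{\mathrm{tr}(bx)}|x\rangle$ with $\omega=e^{2\pi i/p}$ and $\mathrm{tr}:\mathbb{F}_q\to\mathbb{F}_p$ the trace; for $\mathbf{a},\mathbf{b}\in\mathbb{F}_q^n$ let $X(\mathbf{a})=\bigotimes_i X(a_i)$, $Z(\mathbf{b})=\bigotimes_i Z(b_i)$. The error group is $G_n=\{\omega^cX(\mathbf{a})Z(\mathbf{b}):\mathbf{a},\mathbf{b}\in\mathbb{F}_q^n, c\in\mathbb{F}_p\}$, and the weight of $\omega^cX(\mathbf{a})Z(\mathbf{b})$ is the number of $i$ with $(a_i,b_i)\ne(0,0)$. A quantum code with parameters $[[n,k,d]]_q$ is a subspace $Q\subseteq V_n$ of dimension $q^k$ with minimum distance $d$, i.e. for all $|u\rangle,|v\rangle\in Q$ with $\langle u|v\rangle=0$ and every $E\in G_n$ of weight at most $d-1$, $\langle u|E|v\rangle=0$ (and, if $k=0$, as is standard, $d$ is defined via purity: $\langle u|E|u\rangle=\langle u|u\rangle\cdot$const fails only for weight $\ge d$). $Q$ is pure to $t$ if $\langle u|E|v\rangle=0$ for all $|u\rangle,|v\rangle\in Q$ and all $E\in G_n$ of weight between $1$ and $t-1$. *)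

From HB Require Import structures.
From mathcomp Require Import all_boot all_order all_algebra all_field.
Set Implicit Arguments. Unset Strict Implicit. Unset Printing Implicit Defensive.
Import Order.TTheory GRing.Theory Num.Theory.
Local Open Scope ring_scope.

Definition wH (F : finFieldType) (n : nat) (c : 'rV[F]_n) : nat :=
  #|[set i : 'I_n | c 0 i != 0]|.

Definition is_min_dist (F : finFieldType) (n : nat) (C : {vspace 'rV[F]_n})
  (d : nat) : Prop :=
  (exists c, [/\ c \in C, c != 0 & wH c = d]) /\
  (forall c, c \in C -> c != 0 -> (d <= wH c)%N).

Definition galois_form (F : finFieldType) (n p s : nat) (x y : 'rV[F]_n) : F :=
  \sum_(i < n) x 0 i * (y 0 i) ^+ (p ^ s).

Definition sdual (F : finFieldType) (n p s : nat) (C : {vspace 'rV[F]_n})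
  : pred 'rV[F]_n :=
  [pred x : 'rV[F]_n | [forall c : 'rV[F]_n, (c \in C) ==> (galois_form p s c x == 0)]].

Definition edual (F : finFieldType) (n : nat) (A : pred 'rV[F]_n)
  : pred 'rV[F]_n :=
  [pred x : 'rV[F]_n | [forall c : 'rV[F]_n, (c \in A) ==> (\sum_(i < n) c 0 i * x 0 i == 0)]].

Definition pow_code (F : finFieldType) (n : nat) (C : {vspace 'rV[F]_n}) (m : nat)
  : pred 'rV[F]_n :=
  [pred x : 'rV[F]_n | [exists c : 'rV[F]_n, (c \in C) && (x == map_mx (fun a => a ^+ m) c)]].

Definition is_min_wt (F : finFieldType) (n : nat) (S : pred 'rV[F]_n) (d : nat)
  : Prop :=
  (exists c, c \in S /\ wH c = d) /\ (forall c, c \in S -> (d <= wH c)%N).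

(* absolute trace F_{p^e} -> F_p, as an element of F *)
Definition trF (F : finFieldType) (p e : nat) (x : F) : F :=
  \sum_(i < e) x ^+ (p ^ i).

(* the trace as an integer in {0,..,p-1} *)
Definition trn (F : finFieldType) (p e : nat) (x : F) : nat :=
  find (fun k : nat => (k%:R : F) == trF p e x) (iota 0 p).

(* omega = e^{2 pi i / p} : p.-root (-1) is e^{i pi / p} *)
Definition omega (p : nat) : algC := (p.-root (-1)) ^+ 2.

(* V_n = (C^q)^{tensor n}: coordinates indexed by the basis |x>, x in F^n *)
Definition Vn (F : finFieldType) (n : nat) := 'rV[algC]_#|{: 'rV[F]_n}|.

Definition amp (F : finFieldType) (n : nat) (u : Vn F n) (x : 'rV[F]_n) : algC :=
  u 0 (enum_rank x).

Definition cdot (F : finFieldType) (n : nat) (u v : Vn F n) : algC :=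
  \sum_(x : 'rV[F]_n) (amp u x)^* * amp v x.

(* E = X(a) Z(b) : |x> |-> omega^{tr(b.x)} |x + a> *)
Definition errop (F : finFieldType) (n p e : nat) (a b : 'rV[F]_n) (v : Vn F n)
  : Vn F n :=
  \row_(j < #|{: 'rV[F]_n}|)
     (let y := enum_val j in
      omega p ^+ trn p e (\sum_(i < n) b 0 i * (y - a) 0 i) * amp v (y - a)).

Definition wtE (F : finFieldType) (n : nat) (a b : 'rV[F]_n) : nat :=
  #|[set i : 'I_n | (a 0 i != 0) || (b 0 i != 0)]|.

Definition pure_to (F : finFieldType) (n p e : nat) (Q : {vspace Vn F n}) (t : nat)
  : Prop :=
  forall u v, u \in Q -> v \in Q -> forall a b : 'rV[F]_n,
    (0 < wtE a b)%N -> (wtE a b < t)%N -> cdot u (errop p e a b v) = 0.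

Definition detects (F : finFieldType) (n p e : nat) (Q : {vspace Vn F n}) (d : nat)
  : Prop :=
  forall u v, u \in Q -> v \in Q -> cdot u v = 0 -> forall a b : 'rV[F]_n,
    (wtE a b < d)%N -> cdot u (errop p e a b v) = 0.

(* Q is an [[n,k,d]]_q quantum code (q = #|F|); for k = 0, d via purity *)
Definition qcode (F : finFieldType) (n p e : nat) (Q : {vspace Vn F n}) (k d : nat)
  : Prop :=
  \dim Q = (#|F| ^ k)%N /\
  (if k == 0%N then pure_to p e Q d else detects p e Q d).

(* Let W be the s-Galois dual of C2 and D = C2^(p^(e-s)). Raising coordinates to the
   power p^s carries D onto C2 and turns the Euclidean pairing with D into the s-Galois
   pairing with C2, so W is a subspace of C1 with D^perp = W and W^perp = D. The code Q
   is spanned by the coset states |u + W>, u ranging over a complement of W in C1; hence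
   dim Q = q^(k1 - (n - k2)), and every state of Q is supported on C1 and W-periodic.
   For an error X(a)Z(b): if a is not in C1, E|v> is supported outside C1; if b is not
   in D, some z in W has tr(b.z) = 1, and translating the inner product by z multiplies
   it by omega <> 1; otherwise a lies in W and b in C1^perp (else a or b is in S, of
   weight at least d), and E acts trivially on Q. Purity and d >= min(d1, d2) follow
   because a low-weight codeword is zero and the Frobenius preserves weights. *)

From HB Require Import structures.
From mathcomp Require Import all_boot all_order all_algebra all_field.
From mathcomp Require Import zify.
Import Order.TTheory GRing.Theory Num.Theory.
Local Open Scope ring_scope.
Set Implicit Arguments. Unset Strict Implicit.

Section PrimeCharacteristic.
Variables (R : idomainType) (p : nat).
Hypothesis pcharRp : p \in [pchar R].

Let p_gt0 : (0 < p)%N. Proof. exact/prime_gt0/(pcharf_prime pcharRp). Qed.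

Lemma frobeniusD k (x y : R) : (x + y) ^+ (p ^ k) = x ^+ (p ^ k) + y ^+ (p ^ k).
Proof.
apply: exprDn_pchar.
by rewrite (eq_pnat _ (pcharf_eq pcharRp)) pnatX pnat_id ?(pcharf_prime pcharRp).
Qed.

Lemma frobenius0 k : (0 : R) ^+ (p ^ k) = 0.
Proof. by rewrite expr0n expn_eq0 gtn_eqF. Qed.

Lemma frobenius_sum k (I : finType) (f : I -> R) :
  (\sum_i f i) ^+ (p ^ k) = \sum_i f i ^+ (p ^ k).
Proof. exact: (big_morph _ (frobeniusD k) (frobenius0 k)). Qed.

Lemma frobenius_eq0 k (x : R) : (x ^+ (p ^ k) == 0) = (x == 0).
Proof. by rewrite expf_eq0 expn_gt0 p_gt0. Qed.

Lemma natr_inj_pchar a b : (a < p)%N -> (b < p)%N -> (a%:R : R) = b%:R -> a = b.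
Proof.
wlog le_ab : a b / (a <= b)%N => [wlog_ab ap bp eq_ab|ap bp eq_ab].
  by case: (leqP a b) => [|/ltnW] le; [exact: wlog_ab | exact/esym/wlog_ab].
rewrite -(modn_small ap) -(modn_small bp); apply/eqP.
by rewrite eq_sym eqn_mod_dvd // (dvdn_pcharf pcharRp) natrB // eq_ab subrr.
Qed.

(* The p distinct elements k%:R, k < p, already exhaust the roots of X^p - X. *)
Lemma frobenius_fixed_natr (x : R) :
  x ^+ p = x -> exists2 k, (k < p)%N & k%:R = x.
Proof.
move=> xp_x.
have [/existsP[k /eqP <-]|no_k] := boolP [exists k : 'I_p, k%:R == x]; first by exists k.
pose P : {poly R} := 'X^p - 'X; pose rs := x :: [seq k%:R | k <- iota 0 p].
have size_P : size P = p.+1.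
  rewrite size_polyDl size_polyXn // size_polyN size_polyX ltnS.
  exact/prime_gt1/(pcharf_prime pcharRp).
have P_neq0 : P != 0 by rewrite -size_poly_eq0 size_P.
have root_rs : all (root P) rs.
  rewrite /= rootE !hornerE xp_x subrr eqxx; apply/allP => _ /mapP[k _ ->].
  by rewrite rootE !hornerE -(pFrobenius_autE pcharRp) rmorph_nat subrr.
have uniq_rs : uniq rs.
  rewrite /= map_inj_in_uniq ?iota_uniq ?andbT.
    apply/mapP => -[k]; rewrite mem_iota => /andP[_ kp] xk.
    by move/existsP: no_k; apply; exists (Ordinal kp); rewrite xk.
  by move=> a b; rewrite !mem_iota => /andP[_ ap] /andP[_ bp]; apply: natr_inj_pchar.
by have := max_poly_roots P_neq0 root_rs uniq_rs; rewrite size_P /= size_map size_iota ltnn.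
Qed.

End PrimeCharacteristic.

Section Omega.
Variable p : nat.
Hypothesis p_pr : prime p.

Lemma omega_expr_p : omega p ^+ p = 1.
Proof. by rewrite /omega exprAC rootCK ?prime_gt0 // sqrrN expr1n. Qed.

Lemma omega_neq1 : omega p != 1.
Proof.
rewrite /omega sqrf_eq1 negb_or; set r := p.-root (-1).
have rp : r ^+ p = -1 by rewrite rootCK ?prime_gt0.
apply/andP; split; apply/eqP => rE.
  by move: rp; rewrite rE expr1n => /eqP; rewrite -addr_eq0 paddr_eq0 ?ler01 ?oner_eq0.
by have := rootC_lt0 (-1 : algC) (prime_gt1 p_pr); rewrite -/r rE ltrN10.
Qed.

End Omega.

Lemma exists_nonroot (F : finFieldType) (P : {poly F}) :
  P != 0 -> (size P <= #|F|)%N -> exists x, ~~ root P x.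
Proof.
move=> P_neq0 size_P; apply/existsP; apply: contraLR size_P => /existsPn root_P.
rewrite -ltnNge cardE; apply: max_poly_roots P_neq0 _ (enum_uniq F).
by apply/allP => x _; rewrite -[root P x]negbK root_P.
Qed.

Section AbsoluteTrace.
Variables (F : finFieldType) (p e : nat).
Hypotheses (p_pr : prime p) (e_gt0 : (0 < e)%N) (cardF : #|F| = (p ^ e)%N).

Let pcharFp : p \in [pchar F] := card_finPcharP cardF p_pr.

Lemma frobenius_card (x : F) : x ^+ (p ^ e) = x.
Proof. by rewrite -cardF expf_card. Qed.

Lemma trFD (x y : F) : trF p e (x + y) = trF p e x + trF p e y.
Proof. by rewrite /trF -big_split; apply: eq_bigr => i _; apply: frobeniusD. Qed.

Lemma trF0 : trF p e (0 : F) = 0.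
Proof. by rewrite /trF big1 // => i _; apply: frobenius0. Qed.

Lemma trF_frobenius (x : F) : trF p e x ^+ p = trF p e x.
Proof.
rewrite -[X in _ ^+ X]expn1 /trF frobenius_sum //.
case: e e_gt0 frobenius_card => // e' _ xpe.
rewrite big_ord_recr big_ord_recl /= -exprM -expnSr xpe expn0 expr1 addrC.
by congr (_ + _); apply: eq_bigr => i _; rewrite -exprM -expnSr.
Qed.

Let has_trn (x : F) : has (fun k : nat => (k%:R : F) == trF p e x) (iota 0 p).
Proof.
have [k lt_kp <-] := frobenius_fixed_natr pcharFp (trF_frobenius x).
by apply/hasP; exists k; rewrite ?mem_iota.
Qed.

Lemma trn_lt (x : F) : (trn p e x < p)%N.
Proof. by have := has_trn x; rewrite has_find size_iota. Qed.

Lemma natr_trn (x : F) : (trn p e x)%:R = trF p e x.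
Proof. by have /(nth_find 0%N)/eqP := has_trn x; rewrite nth_iota ?trn_lt. Qed.

Lemma trn_eq (x : F) k : (k < p)%N -> k%:R = trF p e x -> trn p e x = k.
Proof. by move=> lt_kp kE; apply: (natr_inj_pchar pcharFp); rewrite ?trn_lt ?natr_trn. Qed.

Lemma trn0 : trn p e (0 : F) = 0%N.
Proof. by apply: trn_eq; rewrite ?prime_gt0 ?trF0. Qed.

Lemma trnD (x y : F) : trn p e (x + y) = ((trn p e x + trn p e y) %% p)%N.
Proof.
apply: trn_eq; first by rewrite ltn_pmod ?prime_gt0.
by rewrite (GRing.natr_mod_pchar pcharFp) natrD !natr_trn trFD.
Qed.

(* The trace is a nonzero polynomial of degree p^(e-1) < #|F|. *)
Lemma exists_trF_neq0 : exists x : F, trF p e x != 0.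
Proof.
pose P : {poly F} := \sum_(i < e) 'X^(p ^ i).
have P_neq0 : P != 0.
  apply/eqP => /(congr1 (coefp 1)) /eqP.
  rewrite /= coef_sum coef0 (bigD1 (Ordinal e_gt0)) //= coefXn expn0 eqxx.
  rewrite big1 ?addr0 ?oner_eq0 // => i /negPf i_neq0.
  rewrite coefXn -[1%N](expn0 p) eqn_exp2l ?prime_gt1 //.
  by rewrite eq_sym -val_eqE in i_neq0 *; rewrite i_neq0.
have [|x] := exists_nonroot P_neq0.
  apply: leq_trans (size_sum _ _ _) _; apply/bigmax_leqP => i _.
  by rewrite size_polyXn cardF ltn_exp2l ?prime_gt1.
by rewrite rootE horner_sum; under eq_bigr do rewrite hornerXn; exists x.
Qed.

Lemma exists_trF_eq1 : exists x : F, trF p e x = 1.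
Proof.
have [x trx_neq0] := exists_trF_neq0.
have trF_fixed k : trF p e x ^+ (p ^ k) = trF p e x.
  by elim: k => [|k IHk]; rewrite ?expr1 // expnSr exprM IHk trF_frobenius.
exists ((trF p e x)^-1 * x); rewrite /trF -[RHS](mulVf trx_neq0) mulr_sumr.
by apply: eq_bigr => i _; rewrite exprMn exprVn trF_fixed.
Qed.

Lemma omega_trnD (x y : F) :
  omega p ^+ trn p e (x + y) = omega p ^+ trn p e x * omega p ^+ trn p e y.
Proof. by rewrite trnD (expr_mod _ (omega_expr_p p_pr)) exprD. Qed.

End AbsoluteTrace.

Lemma span_ind (K : fieldType) (vT : vectType K) (P : vT -> Prop) (X : seq vT) :
  P 0 -> (forall a x y, P x -> P y -> P (a *: x + y)) -> {in X, forall x, P x} ->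
  {in <<X>>%VS, forall v, P v}.
Proof.
move=> P0 P_lin PX v /(@coord_span _ _ _ (in_tuple X)) ->.
apply: (big_ind P) => // [x y Px Py|i _]; first by rewrite -[x]scale1r; apply: P_lin.
by rewrite -[_ *: _]addr0; apply: P_lin => //; apply/PX/mem_nth.
Qed.

Section RowSpaces.
Variables (F : finFieldType) (n : nat).

Lemma card_row_space m (A : 'M[F]_(m, n)) :
  #|[set x : 'rV[F]_n | (x <= A)%MS]| = (#|F| ^ \rank A)%N.
Proof.
rewrite -[in RHS](mul1n (\rank A)) -card_mx.
rewrite -(card_imset _ (row_free_inj (row_base_free A))).
apply: eq_card => x; rewrite inE; apply/idP/imsetP.
  by rewrite -(eq_row_base A) => /submxP[D ->]; exists D.
by case=> D _ ->; rewrite -(eq_row_base A) submxMl.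
Qed.

Lemma mem_span_closed (P : pred 'rV[F]_n) :
  P 0 -> (forall a x y, P x -> P y -> P (a *: x + y)) ->
  forall x, (x \in <<enum P>>%VS) = P x.
Proof.
move=> P0 P_lin x; apply/idP/idP => [x_span|Px]; last by rewrite memv_span ?mem_enum.
by apply: (span_ind P0 P_lin _ x_span) => y; rewrite mem_enum.
Qed.

Lemma dot_mulmx_tr (x y : 'rV[F]_n) : \sum_i x 0 i * y 0 i = (x *m y^T) 0 0.
Proof. by rewrite !mxE; apply: eq_bigr => j _; rewrite mxE. Qed.

Lemma dotDr (x y z : 'rV[F]_n) :
  \sum_i x 0 i * (y + z) 0 i = \sum_i x 0 i * y 0 i + \sum_i x 0 i * z 0 i.
Proof. by rewrite -big_split; apply: eq_bigr => i _; rewrite mxE mulrDr. Qed.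

Lemma edual0 (A : pred 'rV[F]_n) : 0 \in edual A.
Proof.
by rewrite inE; apply/forallP => c; rewrite big1 ?eqxx ?implybT // => i _; rewrite mxE mulr0.
Qed.

Lemma dimv_row_le (U : {vspace 'rV[F]_n}) : (\dim U <= n)%N.
Proof. by have := dimvS (subvf U); rewrite dimvf dim_matrix mul1r. Qed.

Variable U : {vspace 'rV[F]_n}.
Local Notation Uperp := (edual (fun c => c \in U)).

Definition basis_mx : 'M[F]_(\dim U, n) := \matrix_(i < \dim U) (vbasis U)`_i.

Lemma row_free_basis_mx : row_free basis_mx.
Proof.
apply: inj_row_free => v; rewrite mulmx_sum_row => v_basis; apply/rowP => i.
rewrite mxE; move: (basis_free (vbasisP U)) => /freeP; apply; rewrite -[RHS]v_basis.
by apply: eq_bigr => j _; rewrite rowK.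
Qed.

Lemma memv_basis_mx x : (x \in U) = (x <= basis_mx)%MS.
Proof.
apply/idP/submxP => [/coord_vbasis ->|[D ->]].
  exists (\row_i coord (vbasis U) i x); rewrite mulmx_sum_row.
  by apply: eq_bigr => i _; rewrite rowK mxE.
rewrite mulmx_sum_row; apply: rpred_sum => i _.
by rewrite rpredZ // rowK vbasis_mem // memt_nth.
Qed.

Lemma mem_edual_kermx x : (x \in Uperp) = (x <= kermx basis_mx^T)%MS.
Proof.
rewrite sub_kermx inE; apply/forallP/eqP => [x_perp|/(congr1 trmx)].
  apply/rowP => i; rewrite !mxE; have := x_perp (vbasis U)`_i.
  rewrite vbasis_mem ?memt_nth //= => /eqP dot0; rewrite -[RHS]dot0.
  by apply: eq_bigr => j _; rewrite !mxE mulrC.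
rewrite trmx_mul trmxK trmx0 => A_x c; apply/implyP; rewrite memv_basis_mx.
by case/submxP => D ->; rewrite dot_mulmx_tr -mulmxA A_x mulmx0 mxE.
Qed.

Lemma card_edual : #|[set x | x \in Uperp]| = (#|F| ^ (n - \dim U))%N.
Proof.
rewrite -(eqP row_free_basis_mx) -mxrank_tr -mxrank_ker -card_row_space.
by apply: eq_card => x; rewrite !in_set mem_edual_kermx.
Qed.

Lemma edual_edual (x : 'rV[F]_n) :
  (forall y, y \in Uperp -> \sum_i y 0 i * x 0 i = 0) -> x \in U.
Proof.
move=> x_perp; set K := kermx basis_mx^T.
have x_K : (x <= kermx K^T)%MS.
  rewrite sub_kermx; apply/eqP/rowP => i; rewrite !mxE.
  rewrite -[RHS](x_perp (row i K)) ?mem_edual_kermx ?row_sub //.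
  by apply: eq_bigr => j _; rewrite !mxE mulrC.
have A_K : (basis_mx <= kermx K^T)%MS.
  by rewrite sub_kermx -[basis_mx]trmxK -trmx_mul mulmx_ker trmx0.
have rank_K : \rank (kermx K^T) = \rank basis_mx.
  by rewrite !(mxrank_ker, mxrank_tr) subKn ?rank_leq_col.
have /andP[_ K_A] : (basis_mx == kermx K^T)%MS.
  by rewrite -(mxrank_leqif_eq A_K).2 rank_K.
by rewrite memv_basis_mx (submx_trans x_K K_A).
Qed.

End RowSpaces.

Lemma wH_le_wtEl (F : finFieldType) n (a b : 'rV[F]_n) : (wH a <= wtE a b)%N.
Proof. by apply/subset_leq_card/subsetP => i; rewrite !inE => ->. Qed.

Lemma wH_le_wtEr (F : finFieldType) n (a b : 'rV[F]_n) : (wH b <= wtE a b)%N.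
Proof. by apply/subset_leq_card/subsetP => i; rewrite !inE orbC => ->. Qed.

Lemma wtE0 (F : finFieldType) n : wtE (0 : 'rV[F]_n) 0 = 0%N.
Proof. by apply/eqP; rewrite cards_eq0; apply/eqP/setP => i; rewrite !inE !mxE eqxx. Qed.

Lemma min_dist_wH_lt (F : finFieldType) n (C : {vspace 'rV[F]_n}) d c :
  is_min_dist C d -> c \in C -> (wH c < d)%N -> c = 0.
Proof. by move=> [_ d_min] cC; apply: contraTeq => c_neq0; rewrite -leqNgt d_min. Qed.

Section GaloisDual.
Variables (F : finFieldType) (p e s n : nat) (C2 : {vspace 'rV[F]_n}).
Hypotheses (p_pr : prime p) (cardF : #|F| = (p ^ e)%N) (le_se : (s <= e)%N).

Let pcharFp : p \in [pchar F] := card_finPcharP cardF p_pr.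

Definition frobmx k (x : 'rV[F]_n) : 'rV[F]_n := map_mx (fun a => a ^+ (p ^ k)) x.

Lemma frobmxK : cancel (frobmx (e - s)) (frobmx s).
Proof.
by move=> x; apply/rowP => i; rewrite !mxE -exprM -expnD subnK ?frobenius_card.
Qed.

Lemma frobmxKV : cancel (frobmx s) (frobmx (e - s)).
Proof.
by move=> x; apply/rowP => i; rewrite !mxE -exprM -expnD addnC subnK ?frobenius_card.
Qed.

Lemma frobmx_dot k (x y : 'rV[F]_n) :
  (\sum_i x 0 i * y 0 i) ^+ (p ^ k) = \sum_i frobmx k x 0 i * frobmx k y 0 i.
Proof. by rewrite frobenius_sum //; apply: eq_bigr => i _; rewrite !mxE exprMn. Qed.

Lemma frobmx_lin k a (x y : 'rV[F]_n) :
  frobmx k (a *: x + y) = a ^+ (p ^ k) *: frobmx k x + frobmx k y.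
Proof. by apply/rowP => i; rewrite !mxE frobeniusD // exprMn. Qed.

Lemma frobmx0 k : frobmx k 0 = 0.
Proof. by apply/rowP => i; rewrite !mxE frobenius0. Qed.

Lemma wH_frobmx k (x : 'rV[F]_n) : wH (frobmx k x) = wH x.
Proof. by apply: eq_card => i; rewrite !inE mxE frobenius_eq0. Qed.

Local Notation W := (sdual p s C2).
Local Notation D := (pow_code C2 (p ^ (e - s))).

Lemma mem_sdual x : (x \in W) = (frobmx s x \in edual (fun c => c \in C2)).
Proof.
rewrite !inE; apply: eq_forallb => c; congr (_ ==> (_ == 0)).
by apply: eq_bigr => i _; rewrite mxE.
Qed.

Lemma sdual0 : 0 \in W.
Proof. by rewrite mem_sdual frobmx0 mem_edual_kermx sub0mx. Qed.

Lemma sdual_lin a x y : x \in W -> y \in W -> a *: x + y \in W.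
Proof.
rewrite !mem_sdual frobmx_lin !mem_edual_kermx => Wx Wy.
by rewrite addmx_sub ?scalemx_sub.
Qed.

Lemma card_sdual : #|[set x | x \in W]| = (#|F| ^ (n - \dim C2))%N.
Proof.
rewrite -card_edual -(card_preimset _ (can_inj frobmxK)).
by apply: eq_card => x; rewrite inE !in_set mem_sdual frobmxK.
Qed.

Definition sdual_vspace : {vspace 'rV[F]_n} := <<enum W>>%VS.

Lemma mem_sdual_vspace x : (x \in sdual_vspace) = (x \in W).
Proof. exact: mem_span_closed sdual0 sdual_lin x. Qed.

Lemma dim_sdual_vspace : \dim sdual_vspace = (n - \dim C2)%N.
Proof.
apply: (expnI (finNzRing_gt1 F)); rewrite -card_vspace -card_sdual.
by apply: eq_card => x; rewrite mem_sdual_vspace in_set.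
Qed.

Lemma mem_pow_code x : (x \in D) = [exists c, (c \in C2) && (x == frobmx (e - s) c)].
Proof. by []. Qed.

Lemma galois_form_pow (c x : 'rV[F]_n) :
  (\sum_i frobmx (e - s) c 0 i * x 0 i) ^+ (p ^ s) = galois_form p s c x.
Proof.
by rewrite frobmx_dot frobmxK; apply: eq_bigr => i _; rewrite [frobmx s x 0 i]mxE.
Qed.

Lemma edual_pow_code x : (x \in edual D) = (x \in W).
Proof.
rewrite !inE; apply/forallP/forallP => x_perp c; apply/implyP.
  move=> C2c; have := x_perp (frobmx (e - s) c); rewrite mem_pow_code.
  rewrite (introT existsP) /=; last by exists c; rewrite C2c eqxx.
  by move=> /eqP dot0; rewrite -galois_form_pow dot0 frobenius0.
rewrite mem_pow_code => /existsP[c' /andP[C2c' /eqP ->]].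
by rewrite -(frobenius_eq0 pcharFp s) galois_form_pow; apply: (implyP (x_perp c')).
Qed.

Lemma edual_sdual b : b \in edual W -> b \in D.
Proof.
rewrite inE => /forallP b_perp; rewrite mem_pow_code; apply/existsP.
exists (frobmx s b); rewrite frobmxKV eqxx andbT; apply: edual_edual => y C2perp_y.
have W_y : frobmx (e - s) y \in W by rewrite mem_sdual frobmxK.
have /implyP/(_ W_y)/eqP := b_perp (frobmx (e - s) y).
move=> /(congr1 (fun t => t ^+ (p ^ s))); rewrite frobmx_dot frobmxK frobenius0 // => <-.
Qed.

Section CSSCode.
Variable C1 : {vspace 'rV[F]_n}.
Hypothesis e_gt0 : (0 < e)%N.
Hypothesis sdual_sub : forall x, x \in sdual p s C2 -> x \in C1.

Local Notation C1perp := (edual (fun x => x \in C1)).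
Local Notation E := (errop p e).

Lemma sdual_vspace_sub : (sdual_vspace <= C1)%VS.
Proof. by apply/subvP => x; rewrite mem_sdual_vspace; apply: sdual_sub. Qed.

Lemma sdualDr w x : w \in W -> (x + w \in W) = (x \in W).
Proof. by rewrite -!mem_sdual_vspace => W_w; apply: rpredDr. Qed.

Definition coset_reps : {vspace 'rV[F]_n} := (C1 :\: sdual_vspace)%VS.

Lemma coset_reps_sub : (coset_reps <= C1)%VS.
Proof. exact: diffvSl. Qed.

Lemma dim_coset_reps : \dim coset_reps = (\dim C1 - (n - \dim C2))%N.
Proof.
rewrite -(dimv_cap_compl C1 sdual_vspace) (capv_idPr sdual_vspace_sub).
by rewrite dim_sdual_vspace addKn.
Qed.

Definition coset_state (u : 'rV[F]_n) : Vn F n :=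
  \row_j (((enum_val j - u) \in W)%:R : algC).

Definition css_code : {vspace Vn F n} := <<map coset_state (enum coset_reps)>>%VS.

Lemma amp_coset_state u y : amp (coset_state u) y = ((y - u) \in W)%:R.
Proof. by rewrite /amp mxE enum_rankK. Qed.

Lemma amp_lin a (u v : Vn F n) y : amp (a *: u + v) y = a * amp u y + amp v y.
Proof. by rewrite /amp !mxE. Qed.

Lemma amp_sum (I : finType) (v : I -> Vn F n) y :
  amp (\sum_i v i) y = \sum_i amp (v i) y.
Proof. by rewrite /amp summxE. Qed.

Lemma amp_errop a b (v : Vn F n) y :
  amp (E a b v) y = omega p ^+ trn p e (\sum_i b 0 i * (y - a) 0 i) * amp v (y - a).
Proof. by rewrite /amp /errop mxE enum_rankK. Qed.

Lemma amp_coset_reps u u' : u \in coset_reps -> u' \in coset_reps ->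
  amp (coset_state u') u = (u == u')%:R.
Proof.
move=> Uu Uu'; rewrite amp_coset_state -subr_eq0.
suff -> : (u - u' \in W) = (u - u' == 0) by [].
apply/idP/idP => [W_uu'|/eqP ->]; last exact: sdual0.
rewrite -memv0 -(capv_diff C1 sdual_vspace) memv_cap memvB //.
by rewrite mem_sdual_vspace.
Qed.

Lemma free_coset_states : free (map coset_state (enum coset_reps)).
Proof.
apply/(@freeP _ _ _ (in_tuple _)) => k sum_k0 i.
pose rep j := nth 0 (enum coset_reps) j.
have lt_rep (j : 'I_(size (map coset_state (enum coset_reps)))) :
    (j < size (enum coset_reps))%N.
  by rewrite -(size_map coset_state).
have rep_mem j : (j < size (enum coset_reps))%N -> rep j \in coset_reps.
  by move=> lt_j; rewrite -mem_enum mem_nth.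
have /(congr1 (fun v => amp v (rep i))) := sum_k0.
rewrite amp_sum (bigD1 i) //= big1 => [|j j_neq_i].
  rewrite /amp !mxE -/(amp _ _) (nth_map 0) ?lt_rep //.
  by rewrite amp_coset_reps ?rep_mem ?lt_rep // eqxx mulr1 addr0.
rewrite /amp !mxE -/(amp _ _) (nth_map 0) ?lt_rep // amp_coset_reps ?rep_mem ?lt_rep //.
by rewrite nth_uniq ?enum_uniq ?lt_rep // (inj_eq val_inj) eq_sym (negPf j_neq_i) mulr0.
Qed.

Lemma dim_css_code : \dim css_code = (#|F| ^ (\dim C1 + \dim C2 - n))%N.
Proof.
move/eqP: free_coset_states ->; rewrite size_map -cardE card_vspace.
by rewrite dim_coset_reps subnBA ?dimv_row_le.
Qed.

Definition css_invariant (v : Vn F n) :=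
  (forall y, y \notin C1 -> amp v y = 0) /\
  (forall y w, w \in W -> amp v (y + w) = amp v y).

Lemma css_invariant_coset_state u : u \in C1 -> css_invariant (coset_state u).
Proof.
move=> C1u; split => [y|y w W_w]; rewrite !amp_coset_state.
  apply: contraNeq; rewrite pnatr_eq0 eqb0 negbK => W_yu.
  by rewrite -(subrK u y) memvD // sdual_sub.
by rewrite addrAC (sdualDr _ W_w).
Qed.

Lemma css_invariant_css_code v : v \in css_code -> css_invariant v.
Proof.
apply: (@span_ind _ _ css_invariant).
- by split=> *; rewrite /amp !mxE.
- move=> a x y [x_supp x_per] [y_supp y_per].
  split=> [z C1'z|z w W_w]; first by rewrite amp_lin x_supp ?y_supp ?mulr0 ?addr0.
  by rewrite !amp_lin x_per ?y_per.
- move=> _ /mapP[u Uu ->].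
  by apply/css_invariant_coset_state/(subvP coset_reps_sub); rewrite -mem_enum.
Qed.

Section ErrorsOnInvariantStates.
Variables (u v : Vn F n) (a b : 'rV[F]_n).
Hypotheses (inv_u : css_invariant u) (inv_v : css_invariant v).

Lemma cdot_errop_notin_C1 : a \notin C1 -> cdot u (E a b v) = 0.
Proof.
case: inv_u inv_v => [u_supp _] [v_supp _] C1'a; apply: big1 => y _; rewrite amp_errop.
have [C1y|C1'y] := boolP (y \in C1); last by rewrite u_supp // conjC0 mul0r.
rewrite (v_supp (y - a)) ?mulr0 //; apply: contra C1'a => C1ya.
by rewrite -(subKr y a) memvB.
Qed.

Lemma cdot_errop_trn1 z : z \in W -> trn p e (\sum_i b 0 i * z 0 i) = 1%N ->
  cdot u (E a b v) = 0.
Proof.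
case: inv_u inv_v => [_ u_per] [_ v_per] W_z trn_bz.
(* Translating the summation variable by z fixes the amplitudes of u and v and
   multiplies each phase by omega. *)
have cdot_omega : cdot u (E a b v) = omega p * cdot u (E a b v).
  rewrite {1}/cdot (reindex_inj (addIr z)) /= mulr_sumr; apply: eq_bigr => y _.
  rewrite !amp_errop (u_per y z W_z) addrAC (v_per (y - a) z W_z) (dotDr b (y - a) z).
  by rewrite omega_trnD // trn_bz expr1 mulrAC mulrA mulrC.
apply/eqP; have : (1 - omega p) * cdot u (E a b v) == 0.
  by rewrite mulrBl mul1r -cdot_omega subrr.
by rewrite mulf_eq0 subr_eq0 eq_sym (negPf (omega_neq1 p_pr)).
Qed.

Lemma cdot_errop_stabilizer : a \in W -> b \in C1perp -> cdot u (E a b v) = cdot u v.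
Proof.
case: inv_v => [v_supp v_per] W_a C1perp_b; apply: eq_bigr => y _; congr (_ * _).
rewrite amp_errop; have [C1ya|C1'ya] := boolP (y - a \in C1).
  have -> : \sum_i b 0 i * (y - a) 0 i = 0.
    move: C1perp_b; rewrite inE => /forallP/(_ (y - a)); rewrite C1ya => /eqP dot0.
    by rewrite -[RHS]dot0; apply: eq_bigr => i _; rewrite mulrC.
  by rewrite trn0 // expr0 mul1r v_per // -mem_sdual_vspace rpredN mem_sdual_vspace.
rewrite (v_supp _ C1'ya) mulr0 v_supp //; apply: contra C1'ya => C1y.
by rewrite memvB // sdual_sub.
Qed.

End ErrorsOnInvariantStates.

Lemma exists_sdual_trn1 b : b \notin D ->
  exists2 z, z \in W & trn p e (\sum_i b 0 i * z 0 i) = 1%N.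
Proof.
move=> D'b; have : b \notin edual W by apply: contra D'b; apply: edual_sdual.
rewrite inE negb_forall => /existsP[z0]; rewrite negb_imply => /andP[W_z0 z0b_neq0].
have [x1 trx1] := exists_trF_eq1 p_pr e_gt0 cardF.
exists ((x1 / \sum_i z0 0 i * b 0 i) *: z0).
  by rewrite -[_ *: _]addr0 sdual_lin ?sdual0.
apply: trn_eq => //; first exact: prime_gt1.
rewrite -trx1; congr (trF p e _); rewrite -[LHS](divfK z0b_neq0) mulr_sumr.
by apply: eq_bigr => i _; rewrite mxE mulrA mulrC.
Qed.

Lemma cdot_errop_css_code_eq0 u v a b : u \in css_code -> v \in css_code ->
  (a \notin C1) || (b \notin D) -> cdot u (E a b v) = 0.
Proof.
move=> /css_invariant_css_code inv_u /css_invariant_css_code inv_v /orP[C1'a|D'b].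
  exact: cdot_errop_notin_C1.
by have [z W_z trn_bz] := exists_sdual_trn1 D'b; apply: cdot_errop_trn1 trn_bz.
Qed.

(* The set S of the theorem, spelled identically so that the two are convertible. *)
Definition css_weight_set : pred 'rV[F]_n :=
  [pred c | ((c \in C1) && (c \notin edual D)) ||
            ((c \in D) && (c \notin edual (fun x => x \in C1)))].

Lemma mem_css_weight_set c : (c \in css_weight_set) =
  ((c \in C1) && (c \notin W)) || ((c \in D) && (c \notin C1perp)).
Proof. by rewrite -edual_pow_code. Qed.

Lemma css_weight_set_wH_ge d1 d2 c : is_min_dist C1 d1 -> is_min_dist C2 d2 ->
  c \in css_weight_set -> (minn d1 d2 <= wH c)%N.
Proof.
move=> [_ d1_min] [_ d2_min]; rewrite mem_css_weight_set.
case/orP=> [/andP[C1c W'c]|/andP[Dc perp'c]].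
  have c_neq0 : c != 0 by apply: contraNneq W'c => ->; apply: sdual0.
  exact: leq_trans (geq_minl _ _) (d1_min c C1c c_neq0).
have c_neq0 : c != 0 by apply: contraNneq perp'c => ->; apply: edual0.
move: Dc; rewrite mem_pow_code => /existsP[c' /andP[C2c' /eqP c_def]].
have c'_neq0 : c' != 0 by apply: contraNneq c_neq0 => c'0; rewrite c_def c'0 frobmx0.
by rewrite c_def wH_frobmx; apply: leq_trans (geq_minr _ _) (d2_min c' C2c' c'_neq0).
Qed.

(* When k1 + k2 = n the inclusion of W in C1 is an equality. *)
Lemma css_weight_set_eq0 c : (\dim C1 + \dim C2 - n = 0)%N -> c \notin css_weight_set.
Proof.
move=> dim_eq0; have C1_W x : x \in C1 -> x \in W.
  have le_dim : (\dim C1 <= \dim sdual_vspace)%N.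
    by rewrite dim_sdual_vspace; move: dim_eq0 (dimv_row_le C2); lia.
  have /eqP <- : sdual_vspace == C1.
    by rewrite -(dimv_leqif_eq sdual_vspace_sub) eqn_leq le_dim dimvS ?sdual_vspace_sub.
  by rewrite mem_sdual_vspace.
apply/negP; rewrite mem_css_weight_set.
case/orP=> [/andP[/C1_W W_c /negP]|/andP[Dc /negP]]; apply=> //.
rewrite inE; apply/forallP => x; apply/implyP => /C1_W.
rewrite -edual_pow_code inE => /forallP/(_ c); rewrite Dc /= => /eqP dot0.
by apply/eqP; rewrite -[RHS]dot0; apply: eq_bigr => i _; rewrite mulrC.
Qed.

Lemma css_code_detects d : is_min_wt css_weight_set d -> detects p e css_code d.
Proof.
move=> [_ d_min] u v Qu Qv uv0 a b lt_wt_d.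
have [/andP[C1a Db]|] := boolP ((a \in C1) && (b \in D)); last first.
  by rewrite negb_and => C1'a_or_D'b; apply: cdot_errop_css_code_eq0.
have notin_S c : (wH c <= wtE a b)%N -> c \notin css_weight_set.
  by move=> le_c; apply/negP => /d_min /leq_trans /(_ le_c); rewrite leqNgt lt_wt_d.
have := notin_S a (wH_le_wtEl a b).
rewrite mem_css_weight_set C1a /= => /norP[/negbNE W_a _].
have := notin_S b (wH_le_wtEr a b).
rewrite mem_css_weight_set Db /= => /norP[_ /negbNE C1perp_b].
by rewrite cdot_errop_stabilizer //; apply: css_invariant_css_code.
Qed.

Lemma css_code_pure d1 d2 : is_min_dist C1 d1 -> is_min_dist C2 d2 ->
  pure_to p e css_code (minn d1 d2).
Proof.
move=> md1 md2 u v Qu Qv a b wt_gt0 lt_wt.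
have [/andP[C1a Db]|] := boolP ((a \in C1) && (b \in D)); last first.
  by rewrite negb_and => C1'a_or_D'b; apply: cdot_errop_css_code_eq0.
have a0 : a = 0.
  apply: min_dist_wH_lt md1 C1a _.
  exact: leq_ltn_trans (wH_le_wtEl a b) (leq_trans lt_wt (geq_minl _ _)).
move: Db; rewrite mem_pow_code => /existsP[c /andP[C2c /eqP b_def]].
have c0 : c = 0.
  apply: min_dist_wH_lt md2 C2c _; rewrite -(wH_frobmx (e - s)) -b_def.
  exact: leq_ltn_trans (wH_le_wtEr a b) (leq_trans lt_wt (geq_minr _ _)).
by move: wt_gt0; rewrite a0 b_def c0 frobmx0 wtE0.
Qed.

End CSSCode.

End GaloisDual.

Theorem corollary2p3 (p e s n : nat) (F : finFieldType)
  (C1 C2 : {vspace 'rV[F]_n}) (k1 k2 d1 d2 : nat) :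
  prime p -> (0 < e)%N -> #|F| = (p ^ e)%N -> (s < e)%N ->
  \dim C1 = k1 -> is_min_dist C1 d1 ->
  \dim C2 = k2 -> is_min_dist C2 d2 ->
  (forall x, x \in sdual p s C2 -> x \in C1) ->
  let D := pow_code C2 (p ^ (e - s)) in
  let S : pred 'rV[F]_n :=
    [pred c | ((c \in C1) && (c \notin edual D)) ||
              ((c \in D) && (c \notin edual (fun x => x \in C1)))] in
  exists Q : {vspace Vn F n},
    (forall d, is_min_wt S d -> qcode p e Q (k1 + k2 - n) d) /\
    (\dim Q = (#|F| ^ (k1 + k2 - n))%N) /\
    (forall d, is_min_wt S d -> (minn d1 d2 <= d)%N) /\
    pure_to p e Q (minn d1 d2).
Proof.
move=> p_pr e_gt0 cardF lt_se dimC1 md1 dimC2 md2 sdual_sub D S.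
have le_se := ltnW lt_se; exists (css_code p s C2 C1).
have dimQ : \dim (css_code p s C2 C1) = (#|F| ^ (k1 + k2 - n))%N.
  by rewrite -dimC1 -dimC2 (dim_css_code p_pr cardF le_se sdual_sub).
split; [|split; [exact: dimQ | split]].
- move=> d min_d; split=> //; case: eqP => [k0|_]; last exact: css_code_detects.
  have [[c [Sc _]] _] := min_d; exfalso; move: Sc; apply/negP.
  by apply: css_weight_set_eq0 => //; rewrite dimC1 dimC2.
- by move=> d [[c [Sc <-]] _]; apply: css_weight_set_wH_ge Sc.
- exact: css_code_pure.
Qed.
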